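(* Let $X',X''$ be a disjoint cover of an index set $X$, $\Pi:=\Pi X$, $\Pi':=\Pi X'$, $\Pi'':=\Pi X''$, and let $\preceq\subseteq(\Pi\times\Pi)\cup(\Pi'\times\Pi')\cup(\Pi''\times\Pi'')$ be a (generalized) Hamming relation with associated $\mu$. For $\Sigma\subseteq\Pi$ let $\Sigma':=\Sigma\upharpoonright X'$ and $\Sigma'':=\Sigma\upharpoonright X''$. (1) If $\preceq$ is smooth, then for every $\Sigma\subseteq\Pi$ (not necessarily of the form $\Sigma'\times\Sigma''$): if $\mu(\Sigma')\times\mu(\Sigma'')\subseteq\Sigma$ then $\mu(\Sigma)=\mu(\Sigma')\times\mu(\Sigma'')$. (2) For every $\Sigma\subseteq\Pi$ with $\Sigma=\Sigma'\times\Sigma''$ we have $\mu(\Sigma)=\mu(\Sigma')\times\mu(\Sigma'')$ (condition ($\mu$*1)); consequently, for the size notion ''$B\subseteq A$ is big iff $\mu(A)\subseteq B\subseteq A$'', condition (S*1) holds: for $\Sigma'\subseteq\Pi'$, $\Sigma''\subseteq\Pi''$, $\Delta\subseteq\Sigma'\times\Sigma''$, $\Delta$ is big in $\Sigma'\times\Sigma''$ iff there is $\Gamma'\times\Gamma''\subseteq\Delta$ with $\Gamma'$ big in $\Sigma'$ and $\Gamma''$ big in $\Sigma''$.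
   Context: $\Pi X$ is the product of the value sets over the indices in $X$. Elements $\sigma\in\Pi$ are written $\sigma=\sigma'\circ\sigma''$ (concatenation) with $\sigma'=\sigma\upharpoonright X'$, $\sigma''=\sigma\upharpoonright X''$. $\preceq$ is a (generalized) Hamming relation iff $\preceq$ is reflexive and for all $\sigma,\tau\in\Pi$: $\sigma\preceq\tau\iff(\sigma'\preceq\tau'$ and $\sigma''\preceq\tau'')$. $x\prec y$ means $x\preceq y$ and $x\neq y$. For a set $A$ (subset of $\Pi$, $\Pi'$ or $\Pi''$), $\mu(A):=\{x\in A:\neg\exists x'\in A.\,x'\prec x\}$. $\preceq$ is smooth iff for every such $A$ and every $x\in A-\mu(A)$ there is $x'\in\mu(A)$ with $x'\prec x$. *)

Set Implicit Arguments.

(* Index set X with value sets V x; X' = {x | Xp x}, X'' = {x | ~ Xp x}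
   (a disjoint cover of X). *)
Definition Pi (X : Type) (V : X -> Type) : Type := forall x : X, V x.
Definition Pi1 (X : Type) (V : X -> Type) (Xp : X -> Prop) : Type :=
  forall x : {x : X | Xp x}, V (proj1_sig x).
Definition Pi2 (X : Type) (V : X -> Type) (Xp : X -> Prop) : Type :=
  forall x : {x : X | ~ Xp x}, V (proj1_sig x).

Definition res1 (X : Type) (V : X -> Type) (Xp : X -> Prop) (s : Pi V) : Pi1 V Xp :=
  fun x => s (proj1_sig x).
Definition res2 (X : Type) (V : X -> Type) (Xp : X -> Prop) (s : Pi V) : Pi2 V Xp :=
  fun x => s (proj1_sig x).

Definition resS1 (X : Type) (V : X -> Type) (Xp : X -> Prop) (S : Pi V -> Prop) : Pi1 V Xp -> Prop :=
  fun t => exists s, S s /\ @res1 X V Xp s = t.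
Definition resS2 (X : Type) (V : X -> Type) (Xp : X -> Prop) (S : Pi V -> Prop) : Pi2 V Xp -> Prop :=
  fun t => exists s, S s /\ @res2 X V Xp s = t.

(* the product Sigma' x Sigma'' as a subset of Pi: all sigma = sigma' o sigma''
   with sigma' in Sigma', sigma'' in Sigma'' *)
Definition prodS (X : Type) (V : X -> Type) (Xp : X -> Prop) (S1 : Pi1 V Xp -> Prop) (S2 : Pi2 V Xp -> Prop) : Pi V -> Prop :=
  fun s => S1 (@res1 X V Xp s) /\ S2 (@res2 X V Xp s).

Definition subset T (A B : T -> Prop) : Prop := forall x, A x -> B x.
Definition seteq T (A B : T -> Prop) : Prop := forall x, A x <-> B x.

Definition strict T (le : T -> T -> Prop) (x y : T) : Prop := le x y /\ x <> y.

Definition mu T (le : T -> T -> Prop) (A : T -> Prop) : T -> Prop :=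
  fun x => A x /\ ~ (exists x', A x' /\ strict le x' x).

Definition smooth_on T (le : T -> T -> Prop) : Prop :=
  forall (A : T -> Prop) x, A x -> ~ mu le A x ->
    exists x', mu le A x' /\ strict le x' x.

Definition reflexive_on T (le : T -> T -> Prop) : Prop := forall x, le x x.

(* The relation <= on (Pi x Pi) u (Pi' x Pi') u (Pi'' x Pi'') is given by its
   three components le, le1, le2. *)
Definition hamming (X : Type) (V : X -> Type) (Xp : X -> Prop) (le : Pi V -> Pi V -> Prop)
  (le1 : Pi1 V Xp -> Pi1 V Xp -> Prop) (le2 : Pi2 V Xp -> Pi2 V Xp -> Prop) : Prop :=
  reflexive_on le /\ reflexive_on le1 /\ reflexive_on le2 /\
  forall s t : Pi V,
    le s t <-> (le1 (@res1 X V Xp s) (@res1 X V Xp t) /\ le2 (@res2 X V Xp s) (@res2 X V Xp t)).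

(* The relation (as a whole) is smooth iff each component is smooth. *)
Definition smooth3 (X : Type) (V : X -> Type) (Xp : X -> Prop) (le : Pi V -> Pi V -> Prop)
  (le1 : Pi1 V Xp -> Pi1 V Xp -> Prop) (le2 : Pi2 V Xp -> Pi2 V Xp -> Prop) : Prop :=
  @smooth_on (Pi V) le /\ @smooth_on (Pi1 V Xp) le1 /\ @smooth_on (Pi2 V Xp) le2.

Definition big T (le : T -> T -> Prop) (B A : T -> Prop) : Prop :=
  subset (mu le A) B /\ subset B A.

(* Every sigma is the concatenation of its two restrictions, and by the Hamming
   property sigma' o sigma'' <= tau iff sigma' <= tau' and sigma'' <= tau''.
   Hence a strict improvement of sigma in a product set can be moved to one
   coordinate, so minimality in a product is minimality in each factor.  When
   Sigma is not a product, smoothness supplies minimal tau' <= sigma' and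
   tau'' <= sigma'' for a minimal sigma; the hypothesis puts tau' o tau'' back
   into Sigma below sigma, so it equals sigma. *)

From Stdlib Require Import Classical ClassicalEpsilon FunctionalExtensionality ProofIrrelevance.

Section Glue.

Context {X : Type} {V : X -> Type} {Xp : X -> Prop}.

Definition glue (s1 : Pi1 V Xp) (s2 : Pi2 V Xp) : Pi V :=
  fun x => match excluded_middle_informative (Xp x) with
           | left h => s1 (exist _ x h)
           | right h => s2 (exist _ x h)
           end.

Lemma res1_glue s1 s2 : res1 Xp (glue s1 s2) = s1.
Proof.
  apply functional_extensionality_dep; intros [x p]; unfold res1, glue; simpl.
  destruct (excluded_middle_informative (Xp x)) as [h | h]; [| contradiction].
  now rewrite (proof_irrelevance _ h p).
Qed.

Lemma res2_glue s1 s2 : res2 Xp (glue s1 s2) = s2.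
Proof.
  apply functional_extensionality_dep; intros [x p]; unfold res2, glue; simpl.
  destruct (excluded_middle_informative (Xp x)) as [h | h]; [contradiction |].
  now rewrite (proof_irrelevance _ h p).
Qed.

Lemma res_inj (s t : Pi V) : res1 Xp s = res1 Xp t -> res2 Xp s = res2 Xp t -> s = t.
Proof.
  intros E1 E2; apply functional_extensionality_dep; intro x.
  destruct (classic (Xp x)) as [h | h].
  - exact (f_equal (fun f => f (exist _ x h)) E1).
  - exact (f_equal (fun f => f (exist (fun x => ~ Xp x) x h)) E2).
Qed.

Lemma prodS_glue S1 S2 s1 s2 : S1 s1 -> S2 s2 -> prodS S1 S2 (glue s1 s2).
Proof. intros H1 H2; unfold prodS; now rewrite res1_glue, res2_glue. Qed.

Lemma subset_resS (S : Pi V -> Prop) : subset S (prodS (resS1 (Xp:=Xp) S) (resS2 (Xp:=Xp) S)).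
Proof. intros s Hs; split; exists s; auto. Qed.

End Glue.

Arguments res_inj {X V} Xp {s t}.
Arguments subset_resS {X V} Xp S.

Section Minimal.

Context {T : Type} {le : T -> T -> Prop}.

Lemma mu_sub {A} : subset (mu le A) A.
Proof. now intros x [Hx _]. Qed.

Lemma mu_le_eq {A x y} : mu le A x -> A y -> le y x -> y = x.
Proof.
  intros [_ Hmin] Hy Hyx; apply NNPP; intro Hne.
  apply Hmin; exists y; repeat split; auto.
Qed.

Lemma mu_seteq {A B} : seteq A B -> seteq (mu le A) (mu le B).
Proof.
  intros E x; unfold mu; split; intros [Hx Hmin]; split; try apply E; auto;
    intros [y [Hy Hyx]]; apply Hmin; exists y; split; auto; apply E; auto.
Qed.

Lemma smooth_mu_below {A x} :
  reflexive_on le -> smooth_on le -> A x -> exists y, mu le A y /\ le y x.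
Proof.
  intros Hrefl Hsmooth Hx.
  destruct (classic (mu le A x)) as [Hmu | Hmu].
  - now exists x.
  - destruct (Hsmooth A x Hx Hmu) as [y [Hy [Hyx _]]]; eauto.
Qed.

End Minimal.

Section Hamming.

Context {X : Type} {V : X -> Type} {Xp : X -> Prop}
  {le : Pi V -> Pi V -> Prop}
  {le1 : Pi1 V Xp -> Pi1 V Xp -> Prop} {le2 : Pi2 V Xp -> Pi2 V Xp -> Prop}.

Hypothesis Hham : hamming le le1 le2.

Lemma le_glue t1 t2 s : le (glue t1 t2) s <-> le1 t1 (res1 Xp s) /\ le2 t2 (res2 Xp s).
Proof. destruct Hham as [_ [_ [_ Hle]]]; now rewrite Hle, res1_glue, res2_glue. Qed.

Lemma mu_of_mu_factors {S1 S2 S s} :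
  subset S (prodS S1 S2) -> S s -> prodS (mu le1 S1) (mu le2 S2) s -> mu le S s.
Proof.
  destruct Hham as [_ [_ [_ Hle]]].
  intros HS Hs [Hmu1 Hmu2]; split; [exact Hs |].
  intros [t [Ht [Hts Hne]]]; apply Hne.
  destruct (HS t Ht) as [Ht1 Ht2]; apply Hle in Hts as [Hts1 Hts2].
  apply (res_inj Xp); [exact (mu_le_eq Hmu1 Ht1 Hts1) | exact (mu_le_eq Hmu2 Ht2 Hts2)].
Qed.

Lemma mu_prodS_sub S1 S2 : subset (mu le (prodS S1 S2)) (prodS (mu le1 S1) (mu le2 S2)).
Proof.
  destruct Hham as [_ [Hrefl1 [Hrefl2 _]]].
  intros s [[Hs1 Hs2] Hmin]; split; split; auto.
  - intros [t1 [Ht1 [Hle1 Hne]]]; apply Hmin.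
    exists (glue t1 (res2 Xp s)); split; [now apply prodS_glue | split].
    + apply le_glue; split; [exact Hle1 | apply Hrefl2].
    + intro E; apply Hne; now rewrite <- E, res1_glue.
  - intros [t2 [Ht2 [Hle2 Hne]]]; apply Hmin.
    exists (glue (res1 Xp s) t2); split; [now apply prodS_glue | split].
    + apply le_glue; split; [apply Hrefl1 | exact Hle2].
    + intro E; apply Hne; now rewrite <- E, res2_glue.
Qed.

Lemma mu_prodS S1 S2 : seteq (mu le (prodS S1 S2)) (prodS (mu le1 S1) (mu le2 S2)).
Proof.
  intro s; split; [apply mu_prodS_sub |].
  intros Hs; apply (mu_of_mu_factors (S1 := S1) (S2 := S2)); [now intros t | | exact Hs].
  destruct Hs as [[Hs1 _] [Hs2 _]]; now split.
Qed.

Lemma mu_resS_product S :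
  seteq S (prodS (resS1 (Xp:=Xp) S) (resS2 (Xp:=Xp) S)) ->
  seteq (mu le S) (prodS (mu le1 (resS1 (Xp:=Xp) S)) (mu le2 (resS2 (Xp:=Xp) S))).
Proof.
  intros E s; split; intro Hs.
  - apply (mu_prodS_sub _ _ s), (mu_seteq E s), Hs.
  - apply (mu_seteq E s), (mu_prodS _ _ s), Hs.
Qed.

Lemma mu_resS_smooth S :
  smooth3 le le1 le2 ->
  subset (prodS (mu le1 (resS1 (Xp:=Xp) S)) (mu le2 (resS2 (Xp:=Xp) S))) S ->
  seteq (mu le S) (prodS (mu le1 (resS1 (Xp:=Xp) S)) (mu le2 (resS2 (Xp:=Xp) S))).
Proof.
  intros [_ [Hsmooth1 Hsmooth2]] Hprod s; split.
  - intros Hs.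
    destruct Hham as [_ [Hrefl1 [Hrefl2 _]]].
    destruct (subset_resS Xp S s (mu_sub s Hs)) as [Hs1 Hs2].
    destruct (smooth_mu_below Hrefl1 Hsmooth1 Hs1) as [t1 [Ht1 Hle1]].
    destruct (smooth_mu_below Hrefl2 Hsmooth2 Hs2) as [t2 [Ht2 Hle2]].
    assert (Hglue : glue t1 t2 = s).
    { apply (mu_le_eq Hs); [now apply Hprod, prodS_glue | now apply le_glue]. }
    rewrite <- Hglue; now apply prodS_glue.
  - intros Hs; apply (mu_of_mu_factors (subset_resS Xp S)); [now apply Hprod | exact Hs].
Qed.

Lemma big_prodS S1 S2 D :
  subset D (prodS S1 S2) ->
  (big le D (prodS S1 S2) <->
   exists G1 G2, subset (prodS G1 G2) D /\ big le1 G1 S1 /\ big le2 G2 S2).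
Proof.
  intros HD; split.
  - intros [Hmu _]; exists (mu le1 S1), (mu le2 S2); split; [| split].
    + intros s Hs; apply Hmu, (mu_prodS _ _ s), Hs.
    + split; [intros t1 Ht1; exact Ht1 | apply mu_sub].
    + split; [intros t2 Ht2; exact Ht2 | apply mu_sub].
  - intros [G1 [G2 [HG [[Hmu1 _] [Hmu2 _]]]]]; split; [| exact HD].
    intros s Hs; apply (mu_prodS _ _ s) in Hs as [Hs1 Hs2].
    apply HG; split; [apply Hmu1 | apply Hmu2]; assumption.
Qed.

End Hamming.

Theorem fact4p9 (X : Type) (V : X -> Type) (Xp : X -> Prop)
  (le : Pi V -> Pi V -> Prop)
  (le1 : Pi1 V Xp -> Pi1 V Xp -> Prop) (le2 : Pi2 V Xp -> Pi2 V Xp -> Prop) :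
  hamming le le1 le2 ->
  (* (1) *)
  (smooth3 le le1 le2 ->
   forall S : Pi V -> Prop,
     subset (prodS (mu le1 (resS1 (Xp:=Xp) S)) (mu le2 (resS2 (Xp:=Xp) S))) S ->
     seteq (mu le S) (prodS (mu le1 (resS1 (Xp:=Xp) S)) (mu le2 (resS2 (Xp:=Xp) S)))) /\
  (* (2) (mu*1) *)
  (forall S : Pi V -> Prop,
     seteq S (prodS (resS1 (Xp:=Xp) S) (resS2 (Xp:=Xp) S)) ->
     seteq (mu le S) (prodS (mu le1 (resS1 (Xp:=Xp) S)) (mu le2 (resS2 (Xp:=Xp) S)))) /\
  (* (2) consequently (S*1) *)
  (forall (S1 : Pi1 V Xp -> Prop) (S2 : Pi2 V Xp -> Prop) (D : Pi V -> Prop),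
     subset D (prodS S1 S2) ->
     (big le D (prodS S1 S2) <->
      exists (G1 : Pi1 V Xp -> Prop) (G2 : Pi2 V Xp -> Prop),
        subset (prodS G1 G2) D /\ big le1 G1 S1 /\ big le2 G2 S2)).
Proof.
  intros Hham; split; [| split].
  - intros Hsmooth S; exact (mu_resS_smooth Hham S Hsmooth).
  - exact (mu_resS_product Hham).
  - exact (big_prodS Hham).
Qed.
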